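(* Let $0<\alpha<1$, $t=2^{1-\alpha}$, and let $x\in[0,1]$ be a non-dyadic number with $x\notin\mathcal{S}$. Then there exists $\delta>0$ such that for every $n\ge0$ there exists $J_n\ge n$ with $$\frac{1}{2^{1-\alpha}-1}\,2^{J_n(1-\alpha)}>|C_{J_n-1}(x)|>\delta\, 2^{J_n(1-\alpha)}$$ and either [$C_{J_n-1}(x)>0$ and $i_{J_n+1}(x)=0$] or [$C_{J_n-1}(x)<0$ and $i_{J_n+1}(x)=1$].
   Context: For $x\in[0,1]$ let $i_l(x)\in\{0,1\}$ be its binary digits, $x=\sum_{l\ge1}i_l(x)2^{-l}$. For $n\ge0$, $C_n(x)=\sum_{j=0}^{n}(-1)^{i_{j+1}(x)}2^{(1-\alpha)j}$ (the slope at $x$ of the piecewise affine partial sum $F_n(x)=\sum_{j=0}^n 2^{-\alpha j}\mathrm{dist}(2^jx,\mathbb{Z})$). $\mathcal{S}$ is the set of points of $[0,1]$ of the form $\frac{k}{2^{N}}+\frac{1}{3\cdot 2^{N}}$ or $\frac{k}{2^{N}}+\frac{2}{3\cdot 2^{N}}$ with $k,N\in\mathbb{N}$ (equivalently, points with $i_j(x)+i_{j+1}(x)=1$ for all large $j$). A dyadic number is one of the form $K2^{-N}$ with $K,N\in\mathbb{N}$. *)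

From Stdlib Require Import Reals Lra Lia ZArith.
Open Scope R_scope.

(* l-th binary digit i_l(x) of x in [0,1]: floor(2^l x) mod 2.
   (For non-dyadic x this is the unique binary expansion.) *)
Definition digit (l : nat) (x : R) : nat :=
  Z.to_nat (Z.modulo (Int_part (x * 2 ^ l)) 2).

Definition Cn (alpha : R) (n : nat) (x : R) : R :=
  sum_f_R0 (fun j => (-1) ^ (digit (S j) x) * Rpower 2 ((1 - alpha) * INR j)) n.

Definition dyadic (x : R) : Prop :=
  exists K N : nat, x = INR K / 2 ^ N.

Definition in_S (x : R) : Prop :=
  0 <= x <= 1 /\
  exists k N : nat,
    x = INR k / 2 ^ N + 1 / (3 * 2 ^ N) \/ x = INR k / 2 ^ N + 2 / (3 * 2 ^ N).

From Stdlib Require Import Reals Lra Lia ZArith Classical.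
Open Scope R_scope.

(* Write t = 2^(1-alpha) > 1 and s_l = (-1)^(i_l(x)).  Since x is neither dyadic
   nor in S, its digits are neither eventually constant nor eventually
   alternating, so there are arbitrarily large m with i_(m+1) <> i_(m+2) = i_(m+3).
   For such m, either s_(m+1) C_(m-1) > delta t^m already, or else
   s_(m+3) C_(m+1) = s_(m+3) C_(m-1) - t^m + t^(m+1) >= t^m (t - 1 - delta),
   which exceeds delta t^(m+2) once delta (1 + t^2) < t - 1.  A large signed
   value s_(J+1) C_(J-1) > delta t^J gives both the lower bound and the sign
   condition, while the upper bound is the geometric series bound on |C_(J-1)|. *)

Lemma digit_bit (l : nat) (x : R) : (digit l x = 0 \/ digit l x = 1)%nat.
Proof.
  unfold digit. pose proof (Z.mod_pos_bound (Int_part (x * 2 ^ l)) 2 ltac:(lia)). lia.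
Qed.

Lemma Int_part_double_pow2 (l : nat) (x : R) :
  IZR (Int_part (x * 2 ^ S l)) = 2 * IZR (Int_part (x * 2 ^ l)) + INR (digit (S l) x).
Proof.
  pose proof (base_Int_part (x * 2 ^ l)) as [Hlo Hhi].
  pose proof (base_Int_part (x * 2 ^ S l)) as [Hlo' Hhi'].
  replace (x * 2 ^ S l) with (2 * (x * 2 ^ l)) in Hlo', Hhi' |- * by (simpl; ring).
  unfold digit. replace (2 * (x * 2 ^ l)) with (x * 2 ^ S l) by (simpl; ring).
  set (a := Int_part (x * 2 ^ l)) in *.
  set (b := Int_part (2 * (x * 2 ^ l))) in *.
  replace (Int_part (x * 2 ^ S l)) with b by (unfold b; f_equal; simpl; ring).
  assert (Hba : (b = 2 * a \/ b = 2 * a + 1)%Z).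
  { assert (-1 < b - 2 * a < 2)%Z; [|lia].
    split; apply lt_IZR; rewrite minus_IZR, mult_IZR; simpl; lra. }
  destruct Hba as [-> | ->].
  - rewrite Z.mul_comm, Z_mod_mult, mult_IZR. simpl. lra.
  - rewrite Z.add_comm, Z.mul_comm, Z_mod_plus_full, plus_IZR, mult_IZR. simpl. lra.
Qed.

Lemma Int_part_pow2_nat (L : nat) (x : R) :
  0 <= x -> exists k : nat, IZR (Int_part (x * 2 ^ L)) = INR k.
Proof.
  intros Hx. pose proof (base_Int_part (x * 2 ^ L)) as [_ Hhi].
  assert (0 <= x * 2 ^ L) by (apply Rmult_le_pos; [lra | apply pow_le; lra]).
  assert (Hpos : (0 <= Int_part (x * 2 ^ L))%Z).
  { assert (-1 < Int_part (x * 2 ^ L))%Z by (apply lt_IZR; simpl; lra). lia. }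
  exists (Z.to_nat (Int_part (x * 2 ^ L))).
  rewrite INR_IZR_INZ, Z2Nat.id; auto.
Qed.

Lemma Rabs_sub_Int_part_le (r b : R) : 0 <= b <= 1 -> Rabs (r - (IZR (Int_part r) + b)) <= 1.
Proof. intros Hb. pose proof (base_Int_part r). apply Rabs_le. lra. Qed.

Lemma eq0_of_Rabs_le_invpow2 (z : R) : (forall k : nat, Rabs z <= / 2 ^ k) -> z = 0.
Proof.
  intros Hz. destruct (Req_dec z 0) as [| Hnz]; auto. exfalso.
  destruct (pow_lt_1_zero (/ 2) ltac:(rewrite Rabs_pos_eq; lra) (Rabs z)
              (Rabs_pos_lt z Hnz)) as [N HN].
  specialize (HN N (Nat.le_refl N)). specialize (Hz N).
  rewrite pow_inv, Rabs_pos_eq in HN by (apply Rlt_le, Rinv_0_lt_compat, pow_lt; lra).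
  lra.
Qed.

Lemma eq_div_pow2_of_doubling (x : R) (L : nat) (y : nat -> R) :
  (forall l, (L <= l)%nat -> Rabs (x * 2 ^ l - y l) <= 1) ->
  (forall l, (L <= l)%nat -> y (S l) = 2 * y l) ->
  x = y L / 2 ^ L.
Proof.
  intros Happrox Hdouble.
  assert (Hy : forall k, y (L + k)%nat = 2 ^ k * y L).
  { induction k as [| k IHk].
    - rewrite Nat.add_0_r. simpl. ring.
    - rewrite Nat.add_succ_r, Hdouble, IHk by lia. simpl. ring. }
  assert (HL : 0 < 2 ^ L) by (apply pow_lt; lra).
  enough (x * 2 ^ L - y L = 0) by (field_simplify_eq; lra).
  apply eq0_of_Rabs_le_invpow2. intros k.
  assert (Hk : 0 < 2 ^ k) by (apply pow_lt; lra).
  specialize (Happrox (L + k)%nat ltac:(lia)).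
  rewrite Hy, pow_add in Happrox.
  replace (x * (2 ^ L * 2 ^ k) - 2 ^ k * y L) with (2 ^ k * (x * 2 ^ L - y L)) in Happrox
    by ring.
  rewrite Rabs_mult, Rabs_pos_eq in Happrox by lra.
  apply Rmult_le_reg_l with (2 ^ k); auto. rewrite Rinv_r by lra. lra.
Qed.

Lemma dyadic_of_digits_eventually_constant (x : R) (N : nat) :
  0 <= x ->
  (forall m, (N <= m)%nat -> digit (S m) x = digit (S (S m)) x) ->
  dyadic x.
Proof.
  intros Hx Hconst.
  set (y l := IZR (Int_part (x * 2 ^ l)) + INR (digit (S l) x)).
  assert (Ex : x = y N / 2 ^ N).
  { apply eq_div_pow2_of_doubling.
    - intros l _. apply Rabs_sub_Int_part_le.
      destruct (digit_bit (S l) x) as [-> | ->]; simpl; lra.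
    - intros l Hl. unfold y. rewrite Int_part_double_pow2, <- (Hconst l Hl). ring. }
  destruct (Int_part_pow2_nat N x Hx) as [k Hk].
  exists (k + digit (S N) x)%nat, N.
  rewrite plus_INR, <- Hk. exact Ex.
Qed.

(* 1/3 = 0.0101... and 2/3 = 0.1010... in binary. *)
Lemma in_S_of_digits_eventually_alternating (x : R) (N : nat) :
  0 <= x <= 1 ->
  (forall m, (N <= m)%nat -> digit (S m) x <> digit (S (S m)) x) ->
  in_S x.
Proof.
  intros Hx Halt. split; auto.
  set (y l := IZR (Int_part (x * 2 ^ l)) + (INR (digit (S l) x) + 1) / 3).
  assert (Ex : x = y N / 2 ^ N).
  { apply eq_div_pow2_of_doubling.
    - intros l _. apply Rabs_sub_Int_part_le.
      destruct (digit_bit (S l) x) as [-> | ->]; simpl; lra.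
    - intros l Hl. unfold y. rewrite Int_part_double_pow2.
      specialize (Halt l Hl).
      destruct (digit_bit (S l) x) as [E | E], (digit_bit (S (S l)) x) as [E' | E'];
        rewrite E, E' in *; try congruence; simpl; lra. }
  destruct (Int_part_pow2_nat N x (proj1 Hx)) as [k Hk].
  exists k, N. unfold y in Ex. rewrite Hk in Ex.
  assert (0 < 2 ^ N) by (apply pow_lt; lra).
  destruct (digit_bit (S N) x) as [E | E]; rewrite E in Ex; simpl in Ex;
    [left | right]; rewrite Ex at 1; field; lra.
Qed.

Lemma exists_digit_switch_then_repeat (x : R) (N : nat) :
  0 <= x <= 1 -> ~ dyadic x -> ~ in_S x ->
  exists m, (N <= m)%nat /\ digit (S m) x <> digit (S (S m)) x /\
    digit (S (S m)) x = digit (S (S (S m))) x.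
Proof.
  intros Hx Hdy HS. apply NNPP. intros Hnone.
  assert (Hpropagate : forall m, (N <= m)%nat -> digit (S m) x <> digit (S (S m)) x ->
            digit (S (S m)) x <> digit (S (S (S m))) x).
  { intros m Hm Hsw Hrep. apply Hnone. exists m. auto. }
  destruct (classic (exists m0, (N <= m0)%nat /\ digit (S m0) x <> digit (S (S m0)) x))
    as [[m0 [Hm0 Hsw]] | Hnosw].
  - apply HS, (in_S_of_digits_eventually_alternating x m0 Hx).
    intros m Hm. replace m with (m0 + (m - m0))%nat by lia.
    induction (m - m0)%nat as [| k IHk].
    + rewrite Nat.add_0_r. exact Hsw.
    + rewrite Nat.add_succ_r. apply Hpropagate; [lia | exact IHk].
  - apply Hdy, (dyadic_of_digits_eventually_constant x N (proj1 Hx)).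
    intros m Hm. apply NNPP. intros Hsw. apply Hnosw. exists m. auto.
Qed.

Lemma Rpower2_mult_INR (alpha : R) (j : nat) :
  Rpower 2 ((1 - alpha) * INR j) = Rpower 2 (1 - alpha) ^ j.
Proof. rewrite <- Rpower_mult, Rpower_pow; auto. apply exp_pos. Qed.

Lemma Rpower2_gt1 (alpha : R) : alpha < 1 -> 1 < Rpower 2 (1 - alpha).
Proof.
  intros Ha. rewrite <- (Rpower_O 2) at 1 by lra. apply Rpower_lt; lra.
Qed.

Lemma Cn_S (alpha : R) (m : nat) (x : R) :
  Cn alpha (S m) x = Cn alpha m x + (-1) ^ digit (S (S m)) x * Rpower 2 (1 - alpha) ^ S m.
Proof. rewrite <- Rpower2_mult_INR. reflexivity. Qed.

Lemma Rabs_Cn_le (alpha : R) (m : nat) (x : R) : alpha < 1 ->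
  Rabs (Cn alpha m x) <= (Rpower 2 (1 - alpha) ^ S m - 1) / (Rpower 2 (1 - alpha) - 1).
Proof.
  intros Ha. pose proof (Rpower2_gt1 alpha Ha) as Ht.
  set (t := Rpower 2 (1 - alpha)) in *.
  replace ((t ^ S m - 1) / (t - 1)) with (sum_f_R0 (fun j => t ^ j) m)
    by (rewrite tech3 by lra; field; lra).
  eapply Rle_trans; [apply sum_f_R0_triangle |].
  right. apply sum_eq. intros j _.
  rewrite Rabs_mult, pow_1_abs, Rpower2_mult_INR. fold t.
  rewrite Rabs_pos_eq by (apply pow_le; lra). ring.
Qed.

Lemma signed_Cn_large_after_switch (alpha delta x : R) (p : nat) :
  alpha < 1 ->
  delta * (1 + Rpower 2 (1 - alpha) ^ 2) < Rpower 2 (1 - alpha) - 1 ->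
  digit (S (S p)) x <> digit (S (S (S p))) x ->
  digit (S (S (S p))) x = digit (S (S (S (S p)))) x ->
  (-1) ^ digit (S (S p)) x * Cn alpha p x <= delta * Rpower 2 (1 - alpha) ^ S p ->
  (-1) ^ digit (S (S (S (S p)))) x * Cn alpha (S (S p)) x
    > delta * Rpower 2 (1 - alpha) ^ S (S (S p)).
Proof.
  intros Ha Hdelta Hsw Hrep Hsmall.
  pose proof (Rpower2_gt1 alpha Ha) as Ht.
  rewrite !Cn_S, <- Hrep.
  set (t := Rpower 2 (1 - alpha)) in *.
  assert (HT : 0 < t ^ S p) by (apply pow_lt; lra).
  assert (Hgap : t ^ S p * (t - 1 - delta * (1 + t ^ 2)) > 0)
    by (apply Rmult_lt_0_compat; lra).
  replace (t ^ S (S (S p))) with (t ^ S p * t ^ 2) by (simpl; ring).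
  replace (t ^ S (S p)) with (t ^ S p * t) by (simpl; ring).
  destruct (digit_bit (S (S p)) x) as [E | E], (digit_bit (S (S (S p))) x) as [E' | E'];
    rewrite ?E, ?E' in *; try congruence; simpl in *; nra.
Qed.

Lemma exists_large_signed_Cn (alpha delta x : R) (n : nat) :
  alpha < 1 ->
  delta * (1 + Rpower 2 (1 - alpha) ^ 2) < Rpower 2 (1 - alpha) - 1 ->
  0 <= x <= 1 -> ~ dyadic x -> ~ in_S x ->
  exists J : nat, (n <= J)%nat /\ (1 <= J)%nat /\
    (-1) ^ digit (S J) x * Cn alpha (J - 1) x > delta * Rpower 2 (1 - alpha) ^ J.
Proof.
  intros Ha Hdelta Hx Hdy HS.
  destruct (exists_digit_switch_then_repeat x (S n) Hx Hdy HS)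
    as [[| p] [Hm [Hsw Hrep]]]; [lia |].
  destruct (Rlt_le_dec (delta * Rpower 2 (1 - alpha) ^ S p)
              ((-1) ^ digit (S (S p)) x * Cn alpha p x)) as [Hlarge | Hsmall].
  - exists (S p). replace (S p - 1)%nat with p by lia. repeat split; [lia | lia | lra].
  - exists (S (S (S p))). replace (S (S (S p)) - 1)%nat with (S (S p)) by lia.
    repeat split; [lia | lia |].
    apply signed_Cn_large_after_switch; auto.
Qed.

Lemma sign_digit_of_signed_pos (x c : R) (l : nat) : (-1) ^ digit l x * c > 0 ->
  Rabs c >= (-1) ^ digit l x * c /\
  ((c > 0 /\ digit l x = 0%nat) \/ (c < 0 /\ digit l x = 1%nat)).
Proof.
  intros Hpos. destruct (digit_bit l x) as [E | E]; rewrite E in *; simpl in *.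
  - rewrite Rabs_pos_eq by lra. split; [lra | left; split; auto; lra].
  - rewrite Rabs_left by lra. split; [lra | right; split; auto; lra].
Qed.

Theorem mainTheorem3 (alpha x : R) :
  0 < alpha < 1 ->
  0 <= x <= 1 ->
  ~ dyadic x ->
  ~ in_S x ->
  exists delta : R, 0 < delta /\
    forall n : nat, exists J : nat, (n <= J)%nat /\ (1 <= J)%nat /\
      (1 / (Rpower 2 (1 - alpha) - 1)) * Rpower 2 (INR J * (1 - alpha))
        > Rabs (Cn alpha (J - 1)%nat x) /\
      Rabs (Cn alpha (J - 1)%nat x) > delta * Rpower 2 (INR J * (1 - alpha)) /\
      ((Cn alpha (J - 1)%nat x > 0 /\ digit (J + 1)%nat x = 0%nat) \/
       (Cn alpha (J - 1)%nat x < 0 /\ digit (J + 1)%nat x = 1%nat)).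
Proof.
  intros Ha Hx Hdy HS.
  pose proof (Rpower2_gt1 alpha (proj2 Ha)) as Ht.
  set (t := Rpower 2 (1 - alpha)) in *.
  set (delta := (t - 1) / (2 * (1 + t ^ 2))).
  assert (Hdelta : 0 < delta) by (apply Rdiv_lt_0_compat; nra).
  assert (Hgap : delta * (1 + t ^ 2) < t - 1)
    by (unfold delta; field_simplify; [lra | nra]).
  exists delta. split; [exact Hdelta |]. intros n.
  destruct (exists_large_signed_Cn alpha delta x n (proj2 Ha) Hgap Hx Hdy HS)
    as [J [HnJ [HJ Hlarge]]].
  fold t in Hlarge.
  assert (HtJ : 0 < t ^ J) by (apply pow_lt; lra).
  destruct (sign_digit_of_signed_pos x (Cn alpha (J - 1) x) (S J))
    as [Habs Hsign]; [nra |].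
  pose proof (Rabs_Cn_le alpha (J - 1) x (proj2 Ha)) as Hupper.
  replace (S (J - 1)) with J in Hupper by lia. fold t in Hupper.
  exists J. rewrite (Rmult_comm (INR J)), Rpower2_mult_INR, Nat.add_1_r. fold t.
  repeat split; auto; [| lra].
  apply Rle_lt_trans with (1 := Hupper).
  assert (Hinv : 0 < / (t - 1)) by (apply Rinv_0_lt_compat; lra).
  unfold Rdiv. nra.
Qed.
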